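(* Let $q$ be a prime power, $n\ge 2$, $c\in\mathbb{F}_q^*$ and $M=c\,\mathbb{I}_{n\times n}$. Let $\mathcal{B}_n=\{u\in\mathbb{F}_q^n : \langle u,u\rangle=0\}$ and $\nu'_M:\mathcal{B}_n\to\mathbb{F}_q$, $\nu'_M(u)=\langle u,Mu\rangle$. (i) If $q$ is even, then $\mathrm{Num}'_0(c\,\mathbb{I}_{n\times n})_q=\{0\}$ and $\sharp(\nu_M'^{-1}(0))=q^{n-1}$. (ii) Assume $q$ is odd. Then $\mathrm{Num}'_0(c\,\mathbb{I}_{n\times n})_q=\{0\}$ if either $n\ge 3$, or $n=2$ and $q\equiv 1\pmod 4$, while $\mathrm{Num}'_0(c\,\mathbb{I}_{n\times n})_q=\emptyset$ if $n=2$ and $q\equiv -1\pmod 4$. If $n=2s+1$ is odd, then $\sharp(\nu_M'^{-1}(0))=q^{2s}$. If $n=2s$ with either $s$ even or $q\equiv 1\pmod 4$, then $\sharp(\nu_M'^{-1}(0))=q^{2s-1}+q^s-q^{s-1}$. If $n=2s$ with $s$ odd and $q\equiv -1\pmod 4$, then $\sharp(\nu_M'^{-1}(0))=q^{2s-1}-q^s+q^{s-1}$.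
   Context: The Hermitian form is $\langle u,v\rangle=\sum_i u_i^qv_i$; for $u=(x_1,\dots,x_n)\in\mathbb{F}_q^n$ and $M=(m_{ij})$ over $\mathbb{F}_q$, $\langle u,u\rangle=\sum x_i^2$ and $\langle u,Mu\rangle=\sum_{i,j}m_{ij}x_ix_j$. $\mathrm{Num}'_0(M)_q=\{\langle u,Mu\rangle: u\in\mathbb{F}_q^n\setminus\{0\},\ \langle u,u\rangle=0\}$. *)

From HB Require Import structures.
From mathcomp Require Import all_boot all_order all_algebra all_field.
Set Implicit Arguments. Unset Strict Implicit. Unset Printing Implicit Defensive.
Import GRing.Theory.
Local Open Scope ring_scope.

Definition hform (F : finFieldType) (n : nat) (u v : 'cV[F]_n) : F :=
  \sum_(i < n) (u i 0) ^+ #|F| * v i 0.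

Definition Bn (F : finFieldType) (n : nat) : {set 'cV[F]_n} :=
  [set u | hform u u == 0].

Definition nuM (F : finFieldType) (n : nat) (M : 'M[F]_n) (u : 'cV[F]_n) : F :=
  hform u (M *m u).

Definition Num0' (F : finFieldType) (n : nat) (M : 'M[F]_n) : {set F} :=
  [set nuM M u | u in [set u in Bn F n | u != 0]].

Definition nuM_fiber0 (F : finFieldType) (n : nat) (M : 'M[F]_n) : {set 'cV[F]_n} :=
  [set u in Bn F n | nuM M u == 0].

(* Since x ^+ q = x on F, both <u,u> and <u, c u> are multiples of the sum of squares
   s(u) = u_1^2 + ... + u_n^2.  So nu'^-1(0) = {s = 0}, and Num'_0(c I) is {0} or empty
   according as N_n(0) > 1 or not, where N_n(a) counts the solutions of s(u) = a in F^n;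
   moreover N_(m+n) is the convolution of N_m and N_n.  In characteristic 2 squaring is
   bijective, so N_(n+1)(a) = q^n.  For odd q, more than half of F are squares, so every
   element is a sum of two squares, and the two-square identity
   (x^2 + y^2)(x0^2 + y0^2) = (x x0 - y y0)^2 + (x y0 + y x0)^2 makes N_2 constant on F^*.
   With eps = 1 if -1 is a square (i.e. q = 1 mod 4, via a primitive 4th root of unity)
   and eps = -1 otherwise, N_2(0) = q + eps (q - 1) and N_2(1) = q - eps, whence
   N_(n+2)(0) = eps q N_n(0) + (q - eps) q^n, a recurrence solved in closed form. *)

From HB Require Import structures.
From mathcomp Require Import all_boot all_order all_algebra all_field cyclic.
From mathcomp Require Import zify ring.
Set Implicit Arguments. Unset Strict Implicit. Unset Printing Implicit Defensive.
Import GRing.Theory.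
Local Open Scope ring_scope.

Lemma card_set_sum (T : finType) (P : pred T) : #|[set x | P x]| = (\sum_x P x)%N.
Proof. by rewrite -sum1dep_card big_mkcond. Qed.

Lemma PoszX (m k : nat) : (m ^ k)%N = m%:Z ^+ k :> int.
Proof. by rewrite -natz natrX natz. Qed.

Lemma recurrence_closed_form (R : comPzRingType) (q e : R) (f : nat -> R) :
  f 0%N = 1 -> f 1%N = 1 ->
  (forall n, f n.+2 = e * q * f n + (q - e) * q ^+ n) ->
  forall s, f s.*2.+1 = q ^+ s.*2 /\
            f s.*2.+2 = q ^+ s.*2.+1 + e ^+ s.+1 * (q ^+ s.+1 - q ^+ s).
Proof.
move=> f0 f1 rec; elim=> [|s [IH1 IH2]].
  by rewrite /= f1 rec f0; split; ring.
by rewrite doubleS (rec s.*2.+1) (rec s.*2.+2) IH1 IH2 !exprS; split; ring.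
Qed.

Lemma sqrf_eqN1_prim_root4 (R : idomainType) (x : R) :
  2%:R != 0 :> R -> (x ^+ 2 == -1) = 4.-primitive_root x.
Proof.
move=> two_neq0; have N1_neq1 : -1 != 1 :> R.
  have two : 2%:R = 1 - -1 :> R by ring.
  by apply: contraNneq two_neq0 => N1_1; rewrite two N1_1 subrr.
apply/idP/idP => [/eqP x2 | x_prim].
  have x4 : x ^+ 4 = 1 by rewrite (exprM x 2 2) x2 sqrrN expr1n.
  have [m m_prim m_dvd4] := prim_order_exists (isT : (0 < 4)%N) x4.
  have : ~~ (m %| 2)%N by rewrite (prim_order_dvd m_prim) x2.
  by case: m m_prim m_dvd4 => [|[|[|[|[|m]]]]].
have : x ^+ 2 != 1 by rewrite -(prim_order_dvd x_prim).
have := prim_expr_order x_prim; rewrite (exprM x 2 2) => /eqP.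
by rewrite (sqrf_eq1 (x ^+ 2)) => /orP[/eqP ->|->]; rewrite ?eqxx.
Qed.

Section FiniteField.

Variable F : finFieldType.
Local Notation q := #|F|.

Lemma card_finField_gt1 : (1 < q)%N.
Proof. exact: finNzRing_gt1. Qed.

Lemma card_finField_gt0 : (0 < q)%N.
Proof. exact: ltnW card_finField_gt1. Qed.

Lemma expf_card_pred (x : F) : x != 0 -> x ^+ q.-1 = 1.
Proof.
move=> x_neq0; apply: (mulIf x_neq0).
by rewrite -exprSr prednK ?card_finField_gt0 // expf_card mul1r.
Qed.

Lemma finField_prim_rootP d : (0 < d)%N ->
  (exists z : F, d.-primitive_root z) <-> (d %| q.-1)%N.
Proof.
move=> d_gt0; split=> [[z z_prim] | d_dvd].
  have z_neq0 : z != 0 by rewrite (prim_root_eq0 z_prim) -lt0n.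
  by rewrite (prim_order_dvd z_prim) expf_card_pred.
pose units := enum (predC1 (0 : F)).
have units_root : all q.-1.-unity_root units.
  by apply/allP => x; rewrite mem_enum => x_neq0; apply/unity_rootP/expf_card_pred.
have /hasP[z _ z_prim] : has q.-1.-primitive_root units.
  apply: has_prim_root units_root (enum_uniq _) _; last by rewrite -cardE cardC1.
  by rewrite -ltnS prednK ?card_finField_gt0 ?card_finField_gt1.
by exists (z ^+ (q.-1 %/ d)); apply: dvdn_prim_root.
Qed.

Lemma natf2_eq0_even_card : (2%:R == 0 :> F) = ~~ odd q.
Proof.
have [p p_pr charFp] := finPcharP F.
have q_eq := card_pprimeChar charFp.
have k_gt0 : (0 < logn p q)%N.
  by rewrite lt0n; apply: contraTneq card_finField_gt1 => k0; rewrite q_eq k0.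
rewrite q_eq oddX eqn0Ngt k_gt0 /=.
have char2E : (2%:R == 0 :> F) = (2 \in [pchar F]) by rewrite inE.
rewrite char2E (pcharf_eq charFp).
case: (even_prime p_pr) => [-> | p_odd] //.
by rewrite p_odd; apply: contraTF p_odd => /eqP <-.
Qed.

Lemma natf2_neq0_odd_card : odd q -> 2%:R != 0 :> F.
Proof. by rewrite natf2_eq0_even_card negbK. Qed.

Lemma sqrN1_mod4 : odd q -> (exists x : F, x ^+ 2 = -1) <-> (q %% 4 = 1)%N.
Proof.
move=> /natf2_neq0_odd_card two_neq0.
have prim4P := finField_prim_rootP (isT : (0 < 4)%N).
have q_gt0 := card_finField_gt0.
split=> [[x x2] | q4].
  have /prim4P : exists z : F, 4.-primitive_root z.
    by exists x; rewrite -sqrf_eqN1_prim_root4 ?x2.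
  lia.
have [|x x_prim] := prim4P.2; first lia.
by exists x; apply/eqP; rewrite sqrf_eqN1_prim_root4.
Qed.

Definition sqnorm n (u : 'cV[F]_n) : F := \sum_i u i 0 ^+ 2.

Fixpoint sqr_reps n (a : F) : nat :=
  if n is n'.+1 then (\sum_x sqr_reps n' (a - x ^+ 2)%R)%N else (a == 0 : nat).
Arguments sqr_reps n%_N a%_R.

Lemma sqr_repsS n a : sqr_reps n.+1 a = (\sum_x sqr_reps n (a - x ^+ 2))%N.
Proof. by []. Qed.

Lemma sqnorm_col_mx n (x : F) (v : 'cV[F]_n) :
  sqnorm (col_mx x%:M v) = x ^+ 2 + sqnorm v.
Proof.
rewrite /sqnorm big_split_ord big_ord1 col_mxEu mxE eqxx mulr1n.
by under eq_bigr do rewrite col_mxEd.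
Qed.

Lemma col_mx_scalar_bij n :
  bijective (fun p : F * 'cV[F]_n => col_mx p.1%:M p.2 : 'cV_(1 + n)).
Proof.
exists (fun u => (usubmx u 0 0, dsubmx u)) => [[x v] | u] /=.
  by rewrite col_mxKu col_mxKd mxE eqxx mulr1n.
by rewrite -mx11_scalar vsubmxK.
Qed.

Lemma card_sqnorm_eq n a : #|[set u : 'cV[F]_n | sqnorm u == a]| = sqr_reps n a.
Proof.
elim: n a => [|n IHn] a.
  rewrite card_set_sum (eq_bigr (fun _ => (0 == a : nat))) => [|u _]; last first.
    by rewrite /sqnorm big_ord0.
  by rewrite sum_nat_const card_mx mul1n eq_sym.
rewrite card_set_sum (reindex _ (onW_bij _ (col_mx_scalar_bij n))) /=.
rewrite -(pair_big xpredT xpredT (fun x v => (sqnorm (col_mx x%:M v) == a : nat))) /=.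
apply: eq_bigr => x _; rewrite -IHn card_set_sum; apply: eq_bigr => v _.
by rewrite sqnorm_col_mx addrC (can2_eq (addrK _) (subrK _)).
Qed.

Lemma sqr_reps_add m n a :
  sqr_reps (m + n) a = (\sum_b sqr_reps m b * sqr_reps n (a - b)%R)%N.
Proof.
elim: m a => [|m IHm] a /=.
  rewrite (bigD1 0) //= eqxx mul1n subr0 big1 ?addn0 // => b /negbTE b_neq0.
  by rewrite b_neq0.
under [RHS]eq_bigr do rewrite big_distrl.
rewrite [RHS]exchange_big /=; apply: eq_bigr => x _.
rewrite IHm [RHS](reindex_inj (addIr (x ^+ 2))) /=; apply: eq_bigr => b _.
by rewrite addrK (addrC b) opprD addrA.
Qed.

Lemma sum_sqr_reps n : (\sum_a sqr_reps n a)%N = (q ^ n)%N.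
Proof.
elim: n => [|n IHn] /=.
  by rewrite (bigD1 0) //= eqxx big1 // => b /negbTE ->.
rewrite exchange_big /= expnS -sum_nat_const; apply: eq_bigr => x _.
by rewrite -IHn (reindex_inj (addIr (x ^+ 2))) /=; under eq_bigr do rewrite addrK.
Qed.

Lemma sqnorm0 n : sqnorm (0 : 'cV[F]_n) = 0.
Proof. by rewrite /sqnorm big1 // => i _; rewrite mxE expr0n. Qed.

Lemma sqr_reps0_gt0 n : (0 < sqr_reps n 0)%N.
Proof. by rewrite -card_sqnorm_eq card_gt0; apply/set0Pn; exists 0; rewrite inE sqnorm0. Qed.

Lemma sqr_reps0_mono m n : (m <= n)%N -> (sqr_reps m 0 <= sqr_reps n 0)%N.
Proof.
move/subnKC <-; rewrite sqr_reps_add (bigD1 0) //= subr0.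
by apply: leq_trans (leq_addr _ _); rewrite leq_pmulr ?sqr_reps0_gt0.
Qed.

Lemma sqr_reps1_0 : sqr_reps 1 0 = 1%N.
Proof.
rewrite /= (bigD1 0) //= big1 => [|x x_neq0]; rewrite sub0r oppr_eq0 sqrf_eq0 ?eqxx //.
by rewrite (negbTE x_neq0).
Qed.

Lemma sqr_reps_char2 n a : ~~ odd q -> sqr_reps n.+1 a = (q ^ n)%N.
Proof.
rewrite -natf2_eq0_even_card => two_eq0.
have char2 : 2 \in [pchar F] by rewrite inE two_eq0.
have sqr_inj : injective (fun x : F => x ^+ 2).
  by move=> x y /=; rewrite -!(pFrobenius_autE char2); apply: fmorph_inj.
rewrite /= -(sum_sqr_reps n) [RHS](reindex_inj (addrI a)) /=.
by rewrite [RHS](reindex_inj oppr_inj) /= [RHS](reindex_inj sqr_inj).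
Qed.

Lemma card_sqr_image : (q < 2 * #|[set x ^+ 2 | x : F]|)%N.
Proof.
set A := [set x ^+ 2 | x : F].
pose r a : F := odflt 0 [pick x | x ^+ 2 == a].
have rK x : r (x ^+ 2) ^+ 2 = x ^+ 2.
  by rewrite /r; case: pickP => [y /eqP // | /(_ x)]; rewrite eqxx.
have r_pm x : (x == r (x ^+ 2)) || (x == - r (x ^+ 2)) by rewrite -eqf_sqr rK.
(* g injects F into A * bool and misses (0, false). *)
pose g x := (x ^+ 2, x == r (x ^+ 2)).
have g_inj : injective g.
  move=> x y [xy2]; move: (r_pm x) (r_pm y); rewrite -xy2; set a := r _.
  by case: (x =P a) => [-> | _]; case: (y =P a) => [-> | _] //= /eqP -> /eqP ->.
have g_neq : forall x, g x != (0, false).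
  have r0 : r (0 ^+ 2) = 0 by apply/eqP; rewrite -sqrf_eq0 rK sqrf_eq0.
  by move=> x; rewrite /g xpair_eqE sqrf_eq0; case: eqP => [-> | //]; rewrite r0 eqxx.
have g_sub : g @: setT \subset setX A setT :\ (0, false).
  by apply/subsetP => _ /imsetP[x _ ->]; rewrite !inE g_neq andbT; apply/imsetP; exists x.
have := subset_leq_card g_sub; rewrite card_imset // cardsT.
have := cardsD1 (0, false) (setX A setT); rewrite cardsX cardsT card_bool !inE.
have -> : (0, false).1 \in A by apply/imsetP; exists 0 => //=; rewrite expr0n.
by move=> /= card_eq card_le; rewrite mulnC card_eq add1n ltnS.
Qed.

Lemma sum_two_sqr (a : F) : exists x y : F, x ^+ 2 + y ^+ 2 = a.
Proof.
set A := [set x ^+ 2 | x : F]; set B := [set a - v | v in A].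
have /set0Pn[_ /setIP[/imsetP[x _ ->] /imsetP[_ /imsetP[y _ ->] xy]]] : A :&: B != set0.
  apply: contraTneq card_sqr_image => AB_disj; rewrite -leqNgt.
  have card_B : #|B| = #|A| by apply: card_imset; apply: inv_inj (subKr a).
  by rewrite mul2n -addnn -{2}card_B -cardsUI AB_disj cards0 addn0 max_card.
by exists x, y; rewrite xy subrK.
Qed.

Lemma sqr_reps2E b : sqr_reps 2 b = #|[set p : F * F | p.1 ^+ 2 + p.2 ^+ 2 == b]|.
Proof.
rewrite card_set_sum -(pair_big xpredT xpredT (fun x y => (x ^+ 2 + y ^+ 2 == b : nat))) /=.
apply: eq_bigr => x _; apply: eq_bigr => y _.
by rewrite subr_eq0 subr_eq eq_sym addrC.
Qed.

Lemma sqr_reps2_mul_le a b : a != 0 -> (sqr_reps 2 b <= sqr_reps 2 (a * b))%N.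
Proof.
move=> a_neq0; have [x0 [y0 a_eq]] := sum_two_sqr a; rewrite !sqr_reps2E.
pose f (p : F * F) := (p.1 * x0 - p.2 * y0, p.1 * y0 + p.2 * x0).
pose g (p : F * F) := ((p.1 * x0 + p.2 * y0) / a, (p.2 * x0 - p.1 * y0) / a).
have f_inj : injective f.
  apply: (can_inj (g := g)) => -[u v]; rewrite /f /g /= -a_eq.
  by congr pair; field; rewrite a_eq.
rewrite -(card_imset _ f_inj); apply/subset_leq_card/subsetP => _ /imsetP[[u v] + ->].
by rewrite !inE /= => /eqP <-; rewrite -a_eq; apply/eqP; ring.
Qed.

Lemma sqr_reps2_unit a : a != 0 -> sqr_reps 2 a = sqr_reps 2 1.
Proof.
move=> a_neq0; apply/eqP; rewrite eqn_leq; apply/andP; split.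
  by rewrite -(mulVf a_neq0) sqr_reps2_mul_le ?invr_eq0.
by rewrite -[X in (_ <= sqr_reps 2 X)%N](mulr1 a) sqr_reps2_mul_le.
Qed.

Lemma sqr_reps1_sqr c : 2%:R != 0 :> F -> sqr_reps 1 (c ^+ 2) = (c != 0).+1.
Proof.
move=> two_neq0; rewrite sqr_repsS.
have -> : (\sum_y sqr_reps 0 (c ^+ 2 - y ^+ 2))%N = #|[set c; -c]|.
  rewrite (_ : [set c; -c] = [set y | y ^+ 2 == c ^+ 2]) ?card_set_sum.
    by apply: eq_bigr => y _; rewrite /= subr_eq0 eq_sym.
  by apply/setP => y; rewrite !inE eqf_sqr.
by rewrite cards2 -addr_eq0 -mulr2n -mulr_natl mulf_eq0 (negbTE two_neq0).
Qed.

Lemma sqr_reps2_0_sqrN1 (i : F) :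
  2%:R != 0 :> F -> i ^+ 2 = -1 -> sqr_reps 2 0 = (q.*2).-1.
Proof.
move=> two_neq0 i2; have i_neq0 : i != 0 by rewrite -sqrf_eq0 i2 oppr_eq0 oner_eq0.
rewrite sqr_repsS; under eq_bigr => x _ do
  rewrite sub0r -mulN1r -i2 -exprMn sqr_reps1_sqr // mulf_eq0 (negbTE i_neq0) /=.
rewrite (bigD1 0) //= eqxx (eq_bigr (fun _ => 2%N)) => [|x /negbTE ->] //.
by rewrite sum_nat_const cardC1; case: #|F| card_finField_gt0 => //= m _; rewrite muln2.
Qed.

Lemma sqr_reps2_0_nosqrN1 : (forall x : F, x ^+ 2 != -1) -> sqr_reps 2 0 = 1%N.
Proof.
move=> no_sqrN1; rewrite sqr_repsS (bigD1 0) // exprS mul0r subr0 sqr_reps1_0.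
rewrite big1 // => x x_neq0; rewrite sqr_repsS big1 // => y _ /=.
rewrite sub0r -opprD oppr_eq0 addrC addr_eq0; apply/eqP; rewrite eqb0.
apply: contra (no_sqrN1 (y / x)) => /eqP y2.
by rewrite expr_div_n y2 mulNr divff ?expf_neq0.
Qed.

Definition sqrN1_sign : int := if [exists x : F, x ^+ 2 == -1] then 1 else -1.

Lemma sqr_reps2_0_sign : 2%:R != 0 :> F ->
  (sqr_reps 2 0 : int) = q%:Z + sqrN1_sign * (q%:Z - 1).
Proof.
move=> two_neq0; rewrite /sqrN1_sign; case: existsP => [[i /eqP i2] | no_i].
  by rewrite (sqr_reps2_0_sqrN1 two_neq0 i2); have := card_finField_gt0; lia.
rewrite sqr_reps2_0_nosqrN1 => [|x]; first by ring.
by apply/negP => x2; apply: no_i; exists x.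
Qed.

Lemma sqr_reps2_1_sign : 2%:R != 0 :> F -> (sqr_reps 2 1 : int) = q%:Z - sqrN1_sign.
Proof.
move=> two_neq0.
have sum2 : (sqr_reps 2 0 + q.-1 * sqr_reps 2 1)%N = (q ^ 2)%N.
  rewrite -(sum_sqr_reps 2) (bigD1 0) //; congr addn.
  rewrite (eq_bigr (fun _ => sqr_reps 2 1)) => [|b b_neq0]; last exact: sqr_reps2_unit.
  by rewrite sum_nat_const cardC1.
have q_gt1 := card_finField_gt1.
have q_pred_neq0 : (q.-1)%:Z != 0 by lia.
apply: (mulfI q_pred_neq0).
have -> : (q.-1)%:Z * (sqr_reps 2 1)%:Z = q%:Z ^+ 2 - (sqr_reps 2 0)%:Z.
  by move: sum2; lia.
rewrite sqr_reps2_0_sign // (_ : (q.-1)%:Z = q%:Z - 1); first by ring.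
by lia.
Qed.

Lemma sqr_reps0_rec n : 2%:R != 0 :> F ->
  (sqr_reps n.+2 0 : int) =
    sqrN1_sign * q%:Z * (sqr_reps n 0)%:Z + (q%:Z - sqrN1_sign) * q%:Z ^+ n.
Proof.
move=> two_neq0; set S := (\sum_(b : F | b != 0%R) sqr_reps n (- b))%N.
have S_eq : (S + sqr_reps n 0)%N = (q ^ n)%N.
  by rewrite -(sum_sqr_reps n) (reindex_inj oppr_inj) [RHS](bigD1 0) //= oppr0 addnC.
have rec_nat : sqr_reps n.+2 0 = (sqr_reps 2 0 * sqr_reps n 0 + sqr_reps 2 1 * S)%N.
  rewrite (sqr_reps_add 2 n) (bigD1 0) // subr0 big_distrr; congr addn.
  by apply: eq_bigr => b b_neq0; rewrite sub0r sqr_reps2_unit.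
have S_int : S%:Z = q%:Z ^+ n - (sqr_reps n 0)%:Z by rewrite -PoszX -S_eq PoszD addrK.
rewrite rec_nat PoszD !PoszM S_int sqr_reps2_0_sign // sqr_reps2_1_sign //; ring.
Qed.

Lemma sqr_reps0_closed_form s : 2%:R != 0 :> F ->
  sqr_reps s.*2.+1 0 = (q ^ s.*2)%N /\
  (sqr_reps s.*2.+2 0 : int) =
    q%:Z ^+ s.*2.+1 + sqrN1_sign ^+ s.+1 * (q%:Z ^+ s.+1 - q%:Z ^+ s).
Proof.
move=> two_neq0; have f0 : (sqr_reps 0 0)%:Z = 1 by rewrite /= eqxx.
have f1 : (sqr_reps 1 0)%:Z = 1 by rewrite sqr_reps1_0.
have [odd_dim even_dim] := recurrence_closed_form (f := fun n => (sqr_reps n 0)%:Z)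
  f0 f1 (fun n => sqr_reps0_rec n two_neq0) s.
by split; [apply/eqP; rewrite -eqz_nat PoszX odd_dim | exact: even_dim].
Qed.

Lemma sqrN1_sign_exp s : odd q ->
  sqrN1_sign ^+ s = if odd s && (q %% 4 == 3)%N then -1 else 1.
Proof.
move=> q_odd; rewrite /sqrN1_sign; case: existsP => [[x /eqP x2] | no_x].
  have /(sqrN1_mod4 q_odd) -> : exists x : F, x ^+ 2 = -1 by exists x.
  by rewrite andbF expr1n.
have q_mod4 : (q %% 4 == 3)%N.
  suff : (q %% 4 <> 1)%N by lia.
  by move/(sqrN1_mod4 q_odd) => [x x2]; apply: no_x; exists x; rewrite x2.
by rewrite q_mod4 andbT -signr_odd; case: (odd s).
Qed.

Lemma sqr_reps0_odd_dim s : odd q -> sqr_reps s.*2.+1 0 = (q ^ s.*2)%N.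
Proof. by move=> /natf2_neq0_odd_card/(sqr_reps0_closed_form s)[]. Qed.

Lemma sqr_reps0_even_dim_plus s : odd q -> ~~ odd s \/ (q %% 4 = 1)%N ->
  sqr_reps s.*2 0 = (q ^ s.*2.-1 + q ^ s - q ^ s.-1)%N.
Proof.
move=> q_odd; case: s => [_ | s hs]; first by rewrite /= eqxx expn0.
have [_] := sqr_reps0_closed_form s (natf2_neq0_odd_card q_odd).
rewrite sqrN1_sign_exp // ifF ?mul1r; last by case: hs => [/negbTE -> | ->]; rewrite ?andbF.
have := leq_pexp2l card_finField_gt0 (leqnSn s).
by rewrite doubleS /= -!PoszX; lia.
Qed.

Lemma sqr_reps0_even_dim_minus s : odd q -> odd s -> (q %% 4 = 3)%N ->
  sqr_reps s.*2 0 = (q ^ s.*2.-1 - q ^ s + q ^ s.-1)%N.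
Proof.
move=> q_odd; case: s => [// | s s_odd q_mod4].
have [_] := sqr_reps0_closed_form s (natf2_neq0_odd_card q_odd).
rewrite sqrN1_sign_exp // s_odd q_mod4 mulN1r.
have : (q ^ s.+1 <= q ^ s.*2.+1)%N.
  by rewrite leq_pexp2l ?card_finField_gt0 // ltnS -addnn leq_addl.
by rewrite doubleS /= -!PoszX; lia.
Qed.

Lemma hform_sqnorm n (u : 'cV[F]_n) : hform u u = sqnorm u.
Proof. by apply: eq_bigr => i _; rewrite expf_card expr2. Qed.

Lemma nuM_scalar n (c : F) (u : 'cV[F]_n) : nuM c%:M u = c * sqnorm u.
Proof.
rewrite /nuM /hform /sqnorm mul_scalar_mx mulr_sumr; apply: eq_bigr => i _.
by rewrite expf_card mxE mulrCA expr2.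
Qed.

Lemma Bn_sqnorm n : Bn F n = [set u | sqnorm u == 0].
Proof. by apply/setP => u; rewrite !inE hform_sqnorm. Qed.

Lemma card_nuM_fiber0_scalar n (c : F) :
  #|nuM_fiber0 (c%:M : 'M[F]_n)| = sqr_reps n 0.
Proof.
rewrite -card_sqnorm_eq; apply: eq_card => u; rewrite !inE hform_sqnorm nuM_scalar.
by case: eqP => [-> | _]; rewrite ?mulr0 ?eqxx.
Qed.

Lemma Num0'_scalar n (c : F) :
  Num0' (c%:M : 'M[F]_n) = if (1 < sqr_reps n 0)%N then [set 0] else set0.
Proof.
rewrite /Num0'; set I := [set u in Bn F n | u != 0].
have -> : (1 < sqr_reps n 0)%N = (I != set0).
  have -> : I = Bn F n :\ 0 by apply/setP => u; rewrite !inE andbC.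
  rewrite -card_gt0 -card_sqnorm_eq -Bn_sqnorm (cardsD1 0 (Bn F n)).
  by rewrite !inE hform_sqnorm sqnorm0 eqxx add1n ltnS.
have nuM0 : {in I, forall u, nuM c%:M u = 0}.
  by move=> v; rewrite !inE hform_sqnorm nuM_scalar => /andP[/eqP -> _]; rewrite mulr0.
case: (set_0Vmem I) => [I0 | [u u_in]].
  by rewrite I0 eqxx; apply/setP => a; rewrite inE; apply/imsetP => -[v]; rewrite inE.
rewrite (_ : I != set0); last by apply/set0Pn; exists u.
apply/setP => a; rewrite inE; apply/imsetP/eqP => [[v /nuM0 <-] | ->] //.
by exists u; rewrite ?nuM0.
Qed.

End FiniteField.

Theorem proposition7 (F : finFieldType) (n : nat) (c : F) :
  (2 <= n)%N -> c != 0 ->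
  let q := #|F| in
  let M : 'M[F]_n := c%:M in
  (~~ odd q ->
     Num0' M = [set 0] /\ #|nuM_fiber0 M| = (q ^ n.-1)%N) /\
  (odd q ->
     ((3 <= n)%N \/ (n = 2%N /\ (q %% 4 = 1)%N) -> Num0' M = [set 0]) /\
     (n = 2%N -> (q %% 4 = 3)%N -> Num0' M = set0) /\
     (forall s : nat, n = (s.*2).+1 -> #|nuM_fiber0 M| = (q ^ s.*2)%N) /\
     (forall s : nat, n = s.*2 -> ~~ odd s \/ (q %% 4 = 1)%N ->
        #|nuM_fiber0 M| = (q ^ (s.*2).-1 + q ^ s - q ^ s.-1)%N) /\
     (forall s : nat, n = s.*2 -> odd s -> (q %% 4 = 3)%N ->
        #|nuM_fiber0 M| = (q ^ (s.*2).-1 - q ^ s + q ^ s.-1)%N)).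
Proof.
move=> n_ge2 _ q M; rewrite {}/q {}/M Num0'_scalar card_nuM_fiber0_scalar.
have q_gt1 := card_finField_gt1 F.
split=> [q_even | q_odd].
  have reps_n : sqr_reps n (0 : F) = (#|F| ^ n.-1)%N.
    by rewrite -{1}(prednK (ltnW n_ge2)) sqr_reps_char2.
  by rewrite reps_n ifT // -(expn0 #|F|) ltn_exp2l // -ltnS prednK // ltnW.
split.
  case=> [n_ge3 | [-> q_mod4]]; rewrite ifT //.
    apply: leq_trans (sqr_reps0_mono _ n_ge3).
    by rewrite (sqr_reps0_odd_dim 1 q_odd) -(expn0 #|F|) ltn_exp2l.
  by rewrite (sqr_reps0_even_dim_plus (s := 1) q_odd (or_intror q_mod4)) !expn1 expn0; lia.
split.
  by move=> -> q_mod4; rewrite (sqr_reps0_even_dim_minus (s := 1) q_odd) //= subnn.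
split; first by move=> s ->; exact: sqr_reps0_odd_dim.
by split=> s ->; [exact: sqr_reps0_even_dim_plus | exact: sqr_reps0_even_dim_minus].
Qed.
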